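(* Let $\mathbb{X}$ be a finite-dimensional, strictly convex and smooth real Banach space of dimension greater than $1$. Let $\mathcal{F}$ be the class of all norm one operators in $\mathbb{L}(\mathbb{X},\mathbb{X})$ that are smooth points of $\mathbb{L}(\mathbb{X},\mathbb{X})$. Then the pair $(\mathbb{X},\mathbb{X})$ does not have the uniform sBPBp with respect to $\mathcal{F}$.
   Context: $S_{\mathbb{X}}$ is the unit sphere. $\mathbb{X}$ is strictly convex if every point of $S_{\mathbb{X}}$ is an extreme point of the unit ball. A nonzero element $x$ of a Banach space $\mathbb{Z}$ is a smooth point if there is a unique $f\in\mathbb{Z}^*$ with $\|f\|=1$ and $f(x)=\|x\|$; $\mathbb{X}$ is smooth if all its nonzero points are smooth. Given a family $\mathcal{F}$ of norm one operators in $\mathbb{L}(\mathbb{X},\mathbb{Y})$, the pair $(\mathbb{X},\mathbb{Y})$ has uniform sBPBp with respect to $\mathcal{F}$ if for every $\epsilon>0$ there exists $\eta(\epsilon)>0$ such that whenever $T\in\mathcal{F}$ and $x_0\in S_{\mathbb{X}}$ satisfy $\|Tx_0\|>1-\eta(\epsilon)$, there exists $x_1\in S_{\mathbb{X}}$ with $\|Tx_1\|=1$ and $\|x_1-x_0\|<\epsilon$. *)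

From mathcomp Require Import all_boot all_order all_algebra.
From mathcomp Require Import boolp classical_sets reals.
Set Implicit Arguments. Unset Strict Implicit. Unset Printing Implicit Defensive.
Import Order.TTheory GRing.Theory Num.Theory.
Local Open Scope ring_scope.
Local Open Scope classical_set_scope.

Section Defs.
Variable R : realType.

Definition is_norm (V : lmodType R) (N : V -> R) : Prop :=
  [/\ forall x, N x = 0 -> x = 0,
      forall (a : R) x, N (a *: x) = `|a| * N x
    & forall x y, N (x + y) <= N x + N y].

Definition is_linear_fun (V : lmodType R) (f : V -> R) : Prop :=
  forall (a : R) x y, f (a *: x + y) = a * f x + f y.

Definition is_dual_elt (V : lmodType R) (N : V -> R) (f : V -> R) : Prop :=
  is_linear_fun f /\ exists M : R, forall x, `|f x| <= M * N x.

Definition dual_norm (V : lmodType R) (N : V -> R) (f : V -> R) : R :=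
  sup [set `|f x| | x in [set x | N x <= 1]].

Definition smooth_point (V : lmodType R) (N : V -> R) (x : V) : Prop :=
  x <> 0 /\ exists! f : V -> R,
    [/\ is_dual_elt N f, dual_norm N f = 1 & f x = N x].

Definition extreme_point (V : lmodType R) (B : set V) (x : V) : Prop :=
  B x /\ forall y z (t : R), B y -> B z -> 0 < t < 1 ->
    x = t *: y + (1 - t) *: z -> y = z.

Definition strictly_convex (V : lmodType R) (N : V -> R) : Prop :=
  forall x, N x = 1 -> extreme_point [set y | N y <= 1] x.

Definition smooth_space (V : lmodType R) (N : V -> R) : Prop :=
  forall x, x <> 0 -> smooth_point N x.

(* The finite-dimensional space X is modelled as 'rV[R]_n with a norm N;
   operators in L(X,X) are matrices A acting by x |-> x *m A. *)
Definition opnorm (n : nat) (N : 'rV[R]_n -> R) (A : 'M[R]_n) : R :=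
  sup [set N (x *m A) | x in [set x | N x <= 1]].

Definition uniform_sBPBp (n : nat) (N : 'rV[R]_n -> R) (F : set 'M[R]_n) : Prop :=
  forall eps : R, 0 < eps -> exists eta : R, 0 < eta /\
    forall (T : 'M[R]_n) (x0 : 'rV[R]_n), F T -> N x0 = 1 ->
      N (x0 *m T) > 1 - eta ->
      exists x1 : 'rV[R]_n, [/\ N x1 = 1, N (x1 *m T) = 1 & N (x1 - x0) < eps].

Definition smooth_norm_one_ops (n : nat) (N : 'rV[R]_n -> R) : set 'M[R]_n :=
  [set T | opnorm N T = 1 /\ smooth_point (opnorm N) T].

End Defs.

(* Fix a unit vector u, its unique norming functional g, the rank-one operator
   P x = g(x) u and T_d = (1 - d) I + d P for 0 < d < 1 (rank1_proj and
   proj_blend d below).  Since N (x T_d) <= (1 - d) N x + d |g x|, the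
   operator T_d attains its norm 1 only at unit vectors with |g x| = 1, all at
   distance >= 1 from a unit vector x0 of ker g (which exists as dim X > 1),
   while N (x0 T_d) = 1 - d is as close to 1 as we like.

   It remains to see that T_d is a smooth point of L(X, X), its only norming
   functional being A |-> g (u A).  A norming functional F of T_d satisfies
   F P >= 1, so it suffices that opnorm (P + t A) <= 1 + t (g (u A) + eps) for
   small t > 0.  For unit x with |g x| close to 1 this follows from x being
   uniformly close to u or -u (strict convexity and compactness of the unit
   ball) and from the Frechet differentiability of N at u (smoothness and
   compactness of the dual ball); for the other x, |g x| is bounded away
   from 1. *)

From mathcomp Require Import all_boot all_order all_algebra.
From mathcomp Require Import boolp classical_sets reals topology normedtype derive.
From mathcomp Require Import ring lra.
Set Implicit Arguments. Unset Strict Implicit. Unset Printing Implicit Defensive.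
Import Order.TTheory GRing.Theory Num.Theory.
Import numFieldNormedType.Exports.
Local Open Scope ring_scope.
Local Open Scope classical_set_scope.

Section Analysis.
Variable R : realType.

Lemma klipschitz_continuous (V W : normedModType R) (k : R) (f : V -> W) :
  k.-lipschitz f -> continuous f.
Proof.
move=> fk x; apply/cvgrPdist_lt => e e0.
have k1_gt0 : 0 < `|k| + 1 by rewrite ltr_pwDr // normr_ge0.
have := @nbhsx_ballx _ _ x _ (divr_gt0 e0 k1_gt0); apply: filterS => y.
rewrite -ball_normE /= ltr_pdivlMr // => xy; apply: le_lt_trans (fk (x, y) (conj I I)) _.
apply: le_lt_trans xy; rewrite mulrC ler_wpM2l ?normr_ge0 //.
by rewrite (le_trans (ler_norm k)) // lerDl.
Qed.

Lemma continuous_closed_preimage (T U : topologicalType) (f : T -> U) (D : set U) :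
  continuous f -> closed D -> closed (f @^-1` D).
Proof. by move=> cf; apply: preimage_closed => x _; exact: cf. Qed.

Lemma compact_gt_lower_bound (T : topologicalType) (A : set T) (f : T -> R) a :
  compact A -> continuous f -> (forall x, A x -> a < f x) ->
  exists2 e, 0 < e & forall x, A x -> a + e <= f x.
Proof.
move=> cA cf f_gt; have [->|/set0P A0] := eqVneq A set0; first by exists 1.
have [c /set_mem Ac fc_min] := compact_EVT_min A0 cA (continuous_subspaceT cf).
exists (f c - a); first by rewrite subr_gt0 f_gt.
by move=> x Ax; rewrite addrC subrK fc_min //; exact: mem_set.
Qed.

Lemma compact_lt_upper_bound (T : topologicalType) (A : set T) (f : T -> R) a :
  compact A -> continuous f -> (forall x, A x -> f x < a) ->
  exists2 e, 0 < e & forall x, A x -> f x <= a - e.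
Proof.
move=> cA cf f_lt; have [->|/set0P A0] := eqVneq A set0; first by exists 1.
have [c /set_mem Ac fc_max] := compact_EVT_max A0 cA (continuous_subspaceT cf).
exists (a - f c); first by rewrite subr_gt0 f_lt.
by move=> x Ax; rewrite opprB addrC subrK fc_max //; exact: mem_set.
Qed.

Lemma sup_eq_max (E : set R) (x : R) : E x -> ubound E x -> sup E = x.
Proof.
move=> Ex Ex_ub; apply/le_anti; rewrite ge_sup //=; last by exists x.
by apply: sup_upper_bound => //; split; exists x.
Qed.

End Analysis.

Section NormTheory.
Variables (R : realType) (V : lmodType R) (N : V -> R).
Hypothesis HN : is_norm N.

Lemma nrm_eq0 x : N x = 0 -> x = 0.
Proof. by case: HN => + _ _; exact. Qed.

Lemma nrmZ a x : N (a *: x) = `|a| * N x.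
Proof. by case: HN. Qed.

Lemma ler_nrmD x y : N (x + y) <= N x + N y.
Proof. by case: HN. Qed.

Lemma nrm0 : N 0 = 0.
Proof. by rewrite -(scale0r (0 : V)) nrmZ normr0 mul0r. Qed.

Lemma nrmN x : N (- x) = N x.
Proof. by rewrite -scaleN1r nrmZ normrN normr1 mul1r. Qed.

Lemma nrm_ge0 x : 0 <= N x.
Proof.
have := ler_nrmD x (- x); rewrite subrr nrm0 nrmN -mulr2n.
by rewrite -mulr_natl pmulr_rge0.
Qed.

Lemma nrm_gt0 x : x != 0 -> 0 < N x.
Proof. by move=> x0; rewrite lt_def nrm_ge0 andbT; apply: contra_neq x0; exact: nrm_eq0. Qed.

Lemma lerB_nrm x y : N x - N y <= N (x - y).
Proof. by rewrite lerBlDr; have := ler_nrmD (x - y) y; rewrite subrK. Qed.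

Lemma ler_dist_nrm x y : `|N x - N y| <= N (x - y).
Proof. by rewrite ler_norml lerB_nrm andbT -[N (x - y)]nrmN opprB lerNl opprB lerB_nrm. Qed.

Lemma ler_nrm_sum (I : Type) (r : seq I) (F : I -> V) :
  N (\sum_(i <- r) F i) <= \sum_(i <- r) N (F i).
Proof.
elim: r => [|i r IHr]; first by rewrite !big_nil nrm0.
by rewrite !big_cons (le_trans (ler_nrmD _ _)) // lerD2l.
Qed.

Lemma nrm_eq1_neq0 x : N x = 1 -> x <> 0.
Proof. by move=> + x0; rewrite x0 nrm0 => /eqP; rewrite eq_sym oner_eq0. Qed.

Lemma nrm_normalize x : x != 0 -> N ((N x)^-1 *: x) = 1.
Proof.
by move=> x0; rewrite nrmZ ger0_norm ?invr_ge0 ?nrm_ge0 // mulVf // gt_eqF // nrm_gt0.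
Qed.

End NormTheory.

Section LinearFunctional.
Variables (R : realType) (V : lmodType R) (f : V -> R).
Hypothesis f_lin : is_linear_fun f.

Lemma linfun0 : f 0 = 0.
Proof. by have := f_lin 1 0 0; rewrite scale1r addr0 mul1r; lra. Qed.

Lemma linfunZ a x : f (a *: x) = a * f x.
Proof. by rewrite -[a *: x]addr0 f_lin linfun0 addr0. Qed.

Lemma linfunD x y : f (x + y) = f x + f y.
Proof. by have := f_lin 1 x y; rewrite scale1r mul1r. Qed.

Lemma linfunN x : f (- x) = - f x.
Proof. by rewrite -scaleN1r linfunZ mulN1r. Qed.

Lemma linfunB x y : f (x - y) = f x - f y.
Proof. by rewrite linfunD linfunN. Qed.

Lemma linfun_sum (I : Type) (r : seq I) (F : I -> V) :
  f (\sum_(i <- r) F i) = \sum_(i <- r) f (F i).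
Proof.
elim: r => [|i r IHr]; first by rewrite !big_nil linfun0.
by rewrite !big_cons linfunD IHr.
Qed.

End LinearFunctional.

Lemma linfun_kernel_neq0 (R : realType) n (f : 'rV[R]_n -> R) : (1 < n)%N ->
  is_linear_fun f -> exists2 v : 'rV[R]_n, v != 0 & f v = 0.
Proof.
move=> n_gt1 f_lin; pose i0 := Ordinal (ltnW n_gt1); pose i1 := Ordinal n_gt1.
have [f0|f0] := eqVneq (f (delta_mx 0 i0)) 0.
  exists (delta_mx 0 i0) => //.
  by apply/eqP => /matrixP/(_ 0 i0)/eqP; rewrite !mxE !eqxx oner_eq0.
exists (f (delta_mx 0 i1) *: delta_mx 0 i0 - f (delta_mx 0 i0) *: delta_mx 0 i1).
  apply/eqP => /matrixP/(_ 0 i1); rewrite !mxE !eqxx /= mulr0 mulr1 sub0r.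
  by move/eqP; rewrite oppr_eq0 (negbTE f0).
by rewrite (linfunB f_lin) !(linfunZ f_lin) mulrC subrr.
Qed.

Section NormingFunctionals.
Variables (R : realType) (V : lmodType R) (N : V -> R).
Hypothesis HN : is_norm N.

Lemma dual_norm1_le f : is_dual_elt N f -> dual_norm N f = 1 ->
  forall x, `|f x| <= N x.
Proof.
move=> [f_lin [M fM]] f1 x; have [->|x0] := eqVneq x 0.
  by rewrite (linfun0 f_lin) normr0 nrm0.
have Nx_gt0 := nrm_gt0 HN x0.
have : `|f ((N x)^-1 *: x)| <= 1.
  rewrite -f1; apply: sup_upper_bound; last first.
    by exists ((N x)^-1 *: x); rewrite //= nrm_normalize.
  split; first by exists `|f 0|, 0; rewrite //= nrm0.
  exists `|M| => _ [y /= Ny <-]; apply: le_trans (fM y) _.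
  rewrite (le_trans (ler_wpM2r (nrm_ge0 HN y) (ler_norm M))) //.
  by rewrite ler_piMr ?normr_ge0.
by rewrite (linfunZ f_lin) normrM ger0_norm ?invr_ge0 ?nrm_ge0 // ler_pdivrMl // mulr1.
Qed.

Lemma norming_functionalP f u : is_linear_fun f -> (forall x, `|f x| <= N x) ->
  N u = 1 -> f u = 1 -> [/\ is_dual_elt N f, dual_norm N f = 1 & f u = N u].
Proof.
move=> f_lin f_le Nu fu; split=> //; last by rewrite Nu.
  by split=> //; exists 1 => x; rewrite mul1r.
apply: sup_eq_max; first by exists u; rewrite /= ?Nu ?fu ?normr1.
by move=> _ [x /= Nx <-]; exact: le_trans (f_le x) Nx.
Qed.

Lemma smooth_point_norming x : smooth_point N x ->
  exists f, [/\ is_linear_fun f, forall y, `|f y| <= N y & f x = N x].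
Proof.
move=> [_ [f [[f_dual f1 fx] _]]]; exists f.
by split=> //; [case: f_dual | exact: dual_norm1_le].
Qed.

Lemma smooth_point_norming_unique u f h : smooth_point N u -> N u = 1 ->
  is_linear_fun f -> (forall x, `|f x| <= N x) -> f u = 1 ->
  is_linear_fun h -> (forall x, `|h x| <= N x) -> h u = 1 -> f = h.
Proof.
move=> [_ [f0 [_ f0_uniq]]] Nu f_lin f_le fu h_lin h_le hu.
by rewrite -(f0_uniq _ (norming_functionalP f_lin f_le Nu fu))
           -(f0_uniq _ (norming_functionalP h_lin h_le Nu hu)).
Qed.

(* The midpoint of x and u is a unit vector, as f takes the value 1 there. *)
Lemma strictly_convex_norming_eq f u x : strictly_convex N ->
  is_linear_fun f -> (forall y, `|f y| <= N y) -> N u = 1 -> f u = 1 ->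
  N x <= 1 -> 1 <= f x -> x = u.
Proof.
move=> Nsc f_lin f_le Nu fu Nx fx.
have fx1 : f x = 1 by apply/le_anti; rewrite fx (le_trans (ler_norm _) (le_trans (f_le x) Nx)).
have half : 1 - 2^-1 = 2^-1 :> R by rewrite {1}(splitr 1) mul1r addrK.
pose m := 2^-1 *: x + (1 - 2^-1) *: u.
have fm : f m = 1 by rewrite (linfunD f_lin) !(linfunZ f_lin) fx1 fu half; lra.
have Nm : N m = 1.
  apply/le_anti; rewrite -[X in X <= N m]fm (le_trans (ler_norm _) (f_le m)) andbT.
  rewrite (le_trans (ler_nrmD HN _ _)) // !(nrmZ HN) half ger0_norm ?invr_ge0 ?ler0n //.
  by rewrite Nu; lra.
have [_ m_extreme] := Nsc m Nm.
apply: (m_extreme x u 2^-1) => //=; first by rewrite Nu.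
by rewrite invr_gt0 ltr0n invf_lt1 ?ltr0n ?ltr1n.
Qed.

End NormingFunctionals.

Lemma mx_entry_le_norm (K : realDomainType) m n (A : 'M[K]_(m, n)) i j :
  `|A i j| <= `|A|.
Proof.
have /mapP[k _ ->] : `|A i j| \in [seq `|A k.1 k.2| | k : 'I_m * 'I_n].
  by apply/mapP; exists (i, j); rewrite ?mem_enum.
by rewrite [leRHS]/Num.Def.normr /= mx_normrE; apply/bigmax_geP; right; exists k.
Qed.

Lemma mx_norm_le (K : realDomainType) m n (A : 'M[K]_(m, n)) (M : K) :
  0 <= M -> (forall i j, `|A i j| <= M) -> `|A| <= M.
Proof.
move=> M0 A_le; rewrite /Num.Def.normr /= mx_normrE.
by apply: bigmax_le => // -[i j] _; exact: A_le.
Qed.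

Section CoordPairing.
Variables (R : realType) (n : nat).

(* Identifies 'rV_n with its dual, so that compactness arguments in 'rV_n apply
   to sets of functionals. *)
Definition coord_pairing (c y : 'rV[R]_n) : R := \sum_i c 0 i * y 0 i.

Lemma coord_pairing_lin c : is_linear_fun (coord_pairing c).
Proof.
move=> a x y; rewrite /coord_pairing mulr_sumr -big_split; apply: eq_bigr => i _.
by rewrite !mxE mulrDr mulrCA.
Qed.

Lemma coord_pairingB c d y :
  coord_pairing (c - d) y = coord_pairing c y - coord_pairing d y.
Proof. by rewrite /coord_pairing -sumrB; apply: eq_bigr => i _; rewrite !mxE mulrBl. Qed.

Lemma coord_pairing_delta c i : coord_pairing c (delta_mx 0 i) = c 0 i.
Proof.
rewrite /coord_pairing (bigD1 i) //= mxE !eqxx mulr1 big1 ?addr0 // => j ji.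
by rewrite mxE eqxx (negbTE ji) mulr0.
Qed.

Lemma coord_pairing_row f : is_linear_fun f ->
  coord_pairing (\row_i f (delta_mx 0 i)) =1 f.
Proof.
move=> f_lin y; rewrite [in RHS](row_sum_delta y) (linfun_sum f_lin).
by apply: eq_bigr => i _; rewrite (linfunZ f_lin) mxE mulrC.
Qed.

Lemma ler_coord_pairing c y : `|coord_pairing c y| <= n%:R * (`|c| * `|y|).
Proof.
rewrite (le_trans (ler_norm_sum _ _ _)) // mulr_natl -[X in _ *+ X](card_ord n) -sumr_const.
by apply: ler_sum => i _; rewrite normrM ler_pM ?mx_entry_le_norm.
Qed.

Lemma coord_pairing_lipschitz y : (n%:R * `|y|).-lipschitz (coord_pairing^~ y).
Proof.
by move=> -[c d] _ /=; rewrite -coord_pairingB mulrAC -mulrA ler_coord_pairing.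
Qed.

End CoordPairing.

Section FiniteDimensional.
Variables (R : realType) (n : nat) (N : 'rV[R]_n -> R).
Hypothesis HN : is_norm N.

Lemma nrm_le_mx_norm x : N x <= (\sum_i N (delta_mx 0 i)) * `|x|.
Proof.
rewrite {1}(row_sum_delta x) mulr_suml (le_trans (ler_nrm_sum HN _ _)) //.
apply: ler_sum => i _; rewrite nrmZ // mulrC ler_wpM2l ?nrm_ge0 //.
exact: mx_entry_le_norm.
Qed.

Lemma exists_nrm_eq1 : (0 < n)%N -> exists u, N u = 1.
Proof.
move=> n_gt0; pose e := delta_mx 0 (Ordinal n_gt0) : 'rV[R]_n.
have e_neq0 : e != 0.
  by apply/eqP => /matrixP/(_ 0 (Ordinal n_gt0))/eqP; rewrite !mxE !eqxx oner_eq0.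
by exists ((N e)^-1 *: e); exact: nrm_normalize.
Qed.

Lemma nrm_continuous : continuous N.
Proof.
apply: (@klipschitz_continuous _ _ _ (\sum_i N (delta_mx 0 i))) => -[x y] _ /=.
exact: le_trans (ler_dist_nrm HN x y) (nrm_le_mx_norm _).
Qed.

Lemma nrm_sub_continuous (v : 'rV[R]_n) : continuous (fun x : 'rV[R]_n => N (x - v)).
Proof.
apply: (@klipschitz_continuous _ _ _ (\sum_i N (delta_mx 0 i))) => -[x y] _ /=.
by rewrite (le_trans (ler_dist_nrm HN _ _)) // opprB addrA subrK nrm_le_mx_norm.
Qed.

Lemma linfun_continuous f : is_linear_fun f -> (forall x, `|f x| <= N x) ->
  continuous f.
Proof.
move=> f_lin f_le; apply: (@klipschitz_continuous _ _ _ (\sum_i N (delta_mx 0 i))).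
move=> -[x y] _ /=; rewrite -(linfunB f_lin).
exact: le_trans (f_le _) (nrm_le_mx_norm _).
Qed.

Lemma mx_norm_le_nrm : exists2 c, 0 < c & forall x, c * `|x| <= N x.
Proof.
have sphere_compact : compact [set x : 'rV[R]_n | `|x| = 1].
  apply: bounded_closed_compact.
    exists 1; split; first exact: num_real.
    by move=> M M1 x /= ->; exact: ltW.
  exact: continuous_closed_preimage (@norm_continuous _ _) (closed_eq (y := 1)).
have N_gt0 x : `|x| = 1 -> 0 < N x by move=> x1; rewrite nrm_gt0 // -normr_gt0 x1.
have [c c_gt0 c_le] := compact_gt_lower_bound sphere_compact nrm_continuous N_gt0.
exists c => // x; have [->|x0] := eqVneq x 0; first by rewrite normr0 mulr0 nrm_ge0.
have x_gt0 : 0 < `|x| by rewrite normr_gt0.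
have := c_le (`|x|^-1 *: x).
rewrite /= add0r mx_normZ nrmZ // ger0_norm ?invr_ge0 ?normr_ge0 //.
by rewrite mulVf ?gt_eqF // => /(_ erefl); rewrite ler_pdivlMl // mulrC.
Qed.

Lemma compact_nrm_ball r : compact [set x | N x <= r].
Proof.
have [c c_gt0 c_le] := mx_norm_le_nrm.
apply: bounded_closed_compact.
  exists (r / c); split; first exact: num_real.
  move=> M rcM x /= Nx; apply/ltW/(le_lt_trans _ rcM).
  by rewrite ler_pdivlMr // mulrC (le_trans (c_le x)).
exact: continuous_closed_preimage nrm_continuous (closed_le (y := r)).
Qed.

Lemma opnorm_bounded (A : 'M[R]_n) : exists C, forall x, N (x *m A) <= C * N x.
Proof.
have [c c_gt0 c_le] := mx_norm_le_nrm.
exists ((\sum_i N (row i A)) / c) => x.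
rewrite mulmx_sum_row (le_trans (ler_nrm_sum HN _ _)) // -mulrA mulr_suml.
apply: ler_sum => i _; rewrite nrmZ // mulrC ler_wpM2l ?nrm_ge0 //.
rewrite mulrC ler_pdivlMr // mulrC (le_trans _ (c_le x)) //.
by rewrite ler_wpM2l ?(ltW c_gt0) ?mx_entry_le_norm.
Qed.

Let opnorm_set (A : 'M[R]_n) := [set N (x *m A) | x in [set x | N x <= 1]].

Lemma has_sup_opnorm_set A : has_sup (opnorm_set A).
Proof.
split; first by exists (N (0 *m A)), 0; rewrite //= nrm0.
have [C C_le] := opnorm_bounded A.
exists `|C| => _ [x /= Nx <-]; apply: le_trans (C_le x) _.
rewrite (le_trans (ler_wpM2r (nrm_ge0 HN x) (ler_norm C))) //.
by rewrite ler_piMr ?normr_ge0.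
Qed.

Lemma opnorm_ub (A : 'M[R]_n) x : N x <= 1 -> N (x *m A) <= opnorm N A.
Proof. by move=> Nx; apply: sup_upper_bound (has_sup_opnorm_set A) _ _; exists x. Qed.

Lemma opnorm_le (A : 'M[R]_n) s :
  (forall x, N x <= 1 -> N (x *m A) <= s) -> opnorm N A <= s.
Proof.
move=> A_le; apply: ge_sup; first by exists (N (0 *m A)), 0; rewrite //= nrm0.
by move=> _ [x /= Nx <-]; exact: A_le.
Qed.

Lemma opnorm_ge0 (A : 'M[R]_n) : 0 <= opnorm N A.
Proof. by rewrite (le_trans _ (@opnorm_ub A 0 _)) ?mul0mx ?nrm0. Qed.

Lemma nrm_mul_le_opnorm (A : 'M[R]_n) x : N (x *m A) <= opnorm N A * N x.
Proof.
have [->|x0] := eqVneq x 0; first by rewrite mul0mx (nrm0 HN) mulr0.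
have := @opnorm_ub A ((N x)^-1 *: x); rewrite nrm_normalize // lexx => /(_ isT).
rewrite -scalemxAl nrmZ // ger0_norm ?invr_ge0 ?nrm_ge0 //.
by rewrite ler_pdivrMl ?nrm_gt0 // mulrC.
Qed.

Lemma opnorm_is_norm : is_norm (opnorm N).
Proof.
split.
- move=> A A0; apply/row_matrixP => i; rewrite row0 rowE.
  apply: (nrm_eq0 HN); apply/le_anti.
  by rewrite nrm_ge0 // (le_trans (nrm_mul_le_opnorm _ _)) // A0 mul0r.
- move=> a A; apply/le_anti/andP; split.
    apply: opnorm_le => x Nx; rewrite -scalemxAr nrmZ // ler_wpM2l //.
    exact: opnorm_ub.
  have [->|a0] := eqVneq a 0; first by rewrite normr0 mul0r opnorm_ge0.
  rewrite -ler_pdivlMl ?normr_gt0 //; apply: opnorm_le => x Nx.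
  rewrite -[x *m A](scalerK a0) scalemxAr nrmZ // normfV ler_pM2l ?invr_gt0 ?normr_gt0 //.
  exact: opnorm_ub.
- move=> A B; apply: opnorm_le => x Nx; rewrite mulmxDr (le_trans (ler_nrmD HN _ _)) //.
  by rewrite lerD ?opnorm_ub.
Qed.

Lemma compact_dual_ball :
  compact (\bigcap_y [set c | `|coord_pairing c y| <= N y]).
Proof.
apply: bounded_closed_compact.
  exists (\sum_i N (delta_mx 0 i)); split; first exact: num_real.
  move=> M M_gt c c_dual; apply/ltW/(le_lt_trans _ M_gt).
  apply: mx_norm_le => [|i j]; first by rewrite sumr_ge0 // => i _; rewrite nrm_ge0.
  rewrite ord1 -coord_pairing_delta (le_trans (c_dual _ I)) //.
  by rewrite (bigD1 j) //= lerDl sumr_ge0 // => k _; rewrite nrm_ge0.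
apply: closed_bigI => y _; apply: continuous_closed_preimage (closed_le (y := N y)).
apply: (@klipschitz_continuous _ _ _ (n%:R * `|y|)) => -[c d] _ /=.
apply: le_trans (ler_dist_dist _ _) _.
exact: (@coord_pairing_lipschitz _ _ y (c, d) (conj I I)).
Qed.

End FiniteDimensional.

Section SupportedUnitVector.
Variables (R : realType) (n : nat) (N : 'rV[R]_n -> R).
Hypotheses (HN : is_norm N) (N_sc : strictly_convex N) (N_smooth : smooth_space N).
Variables (u : 'rV[R]_n) (g : 'rV[R]_n -> R).
Hypotheses (Nu : N u = 1) (g_lin : is_linear_fun g).
Hypotheses (g_le : forall x, `|g x| <= N x) (gu : g u = 1).

Lemma near_u_of_g_near1 eps : 0 < eps ->
  exists2 eta, 0 < eta & forall x, N x <= 1 -> 1 - eta < g x -> N (x - u) < eps.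
Proof.
move=> eps_gt0.
pose K := [set x | N x <= 1] `&` [set x | eps <= N (x - u)].
have K_compact : compact K.
  apply: compact_closedI; first exact: compact_nrm_ball.
  exact: continuous_closed_preimage (nrm_sub_continuous HN (v := u)) (closed_ge (y := eps)).
have g_lt1 x : K x -> g x < 1.
  move=> [/= Nx eps_le]; rewrite ltNge; apply: contraTN eps_le => gx.
  have -> := strictly_convex_norming_eq HN N_sc g_lin g_le Nu gu Nx gx.
  by rewrite subrr (nrm0 HN) -ltNge.
have [eta eta_gt0 eta_le] :=
  compact_lt_upper_bound K_compact (linfun_continuous HN g_lin g_le) g_lt1.
exists eta => // x Nx gx; rewrite ltNge; apply/negP => eps_le.
by have := eta_le x (conj Nx eps_le); rewrite leNgt gx.
Qed.

Lemma norming_coords_near_g eps : 0 < eps -> exists2 eta, 0 < eta &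
  forall f, is_linear_fun f -> (forall x, `|f x| <= N x) -> 1 - eta < f u ->
  `|\row_i f (delta_mx 0 i) - \row_i g (delta_mx 0 i)| < eps.
Proof.
move=> eps_gt0; pose cg := \row_i g (delta_mx 0 i).
pose K := (\bigcap_y [set c | `|coord_pairing c y| <= N y]) `&` [set c | eps <= `|c - cg|].
have K_compact : compact K.
  apply: compact_closedI; first exact: compact_dual_ball.
  apply: continuous_closed_preimage (closed_ge (y := eps)).
  apply: (@klipschitz_continuous _ _ _ 1) => -[c d] _ /=.
  by rewrite mul1r (le_trans (ler_dist_dist _ _)) // opprB addrA subrK.
have pairing_lt1 c : K c -> coord_pairing c u < 1.
  move=> [c_dual eps_le]; rewrite ltNge; apply: contraTN eps_le => cu.
  have c_le y : `|coord_pairing c y| <= N y by exact: c_dual.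
  have cu1 : coord_pairing c u = 1.
    by apply/le_anti; rewrite cu -Nu (le_trans (ler_norm _)) ?c_le.
  have cg_eq := smooth_point_norming_unique (N_smooth (nrm_eq1_neq0 HN Nu)) Nu
    (coord_pairing_lin c) c_le cu1 g_lin g_le gu.
  have -> : c = cg by apply/rowP => i; rewrite mxE -coord_pairing_delta cg_eq.
  by rewrite subrr normr0 -ltNge.
have [eta eta_gt0 eta_le] := compact_lt_upper_bound K_compact
  (klipschitz_continuous (coord_pairing_lipschitz u)) pairing_lt1.
exists eta => // f f_lin f_le fu; rewrite ltNge; apply/negP => eps_le.
have cf_in_K : K (\row_i f (delta_mx 0 i)).
  by split => // y _; rewrite /= coord_pairing_row.
by have := eta_le _ cf_in_K; rewrite coord_pairing_row // leNgt fu.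
Qed.

Lemma norming_near_g eps : 0 < eps -> exists2 eta, 0 < eta &
  forall f, is_linear_fun f -> (forall x, `|f x| <= N x) -> 1 - eta < f u ->
  forall x, `|f x - g x| <= eps * N x.
Proof.
move=> eps_gt0; have [c c_gt0 c_le] := mx_norm_le_nrm HN.
have n1_gt0 : 0 < n%:R + 1 :> R by rewrite ltr_wpDl.
have [eta eta_gt0 eta_le] := norming_coords_near_g (divr_gt0 (mulr_gt0 eps_gt0 c_gt0) n1_gt0).
exists eta => // f f_lin f_le fu x; have cf_near := eta_le f f_lin f_le fu.
rewrite -(coord_pairing_row f_lin) -(coord_pairing_row g_lin) -coord_pairingB.
rewrite (le_trans (ler_coord_pairing _ _)) //.
have -> : eps * N x = (n%:R + 1) * (eps * c / (n%:R + 1) * `|x|) + eps * (N x - c * `|x|).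
  by field; rewrite gt_eqF.
rewrite -[leLHS]addr0 lerD ?mulr_ge0 ?subr_ge0 ?(ltW eps_gt0) //.
by rewrite ler_pM ?mulr_ge0 ?normr_ge0 ?ler0n ?lerDl ?ler_wpM2r ?normr_ge0 ?(ltW cf_near).
Qed.

(* A norming functional f of u + w nearly norms u, hence is close to g. *)
Lemma nrm_frechet_at eps : 0 < eps -> exists2 eta, 0 < eta &
  forall w, N w <= eta -> N (u + w) <= 1 + g w + eps * N w.
Proof.
move=> eps_gt0; have [eta eta_gt0 eta_near] := norming_near_g eps_gt0.
exists (Num.min (eta / 4) 2^-1); first by rewrite lt_min divr_gt0 //= invr_gt0.
move=> w; rewrite le_min => /andP[Nw_eta Nw_half].
have Nuw_ge : 1 - N w <= N (u + w).
  by have := lerB_nrm HN u (- w); rewrite opprK (nrmN HN) Nu.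
have uw_neq0 : u + w <> 0.
  by move=> uw0; move: Nuw_ge; rewrite uw0 (nrm0 HN); lra.
have [f [f_lin f_le fuw]] := smooth_point_norming HN (N_smooth uw_neq0).
have fu_eq : f u = N (u + w) - f w by rewrite -fuw (linfunD f_lin) addrK.
have fu_near : 1 - eta < f u.
  rewrite fu_eq; have := ler_norm (f w); have := f_le w; lra.
move: (eta_near f f_lin f_le fu_near w) (f_le u).
by rewrite Nu !ler_norml => /andP[_ fgw] /andP[_ fu_le]; lra.
Qed.

End SupportedUnitVector.

Section RankOneProjection.
Variables (R : realType) (n : nat) (N : 'rV[R]_n -> R).
Hypotheses (HN : is_norm N) (N_sc : strictly_convex N) (N_smooth : smooth_space N).
Variables (u : 'rV[R]_n) (g : 'rV[R]_n -> R).
Hypotheses (Nu : N u = 1) (g_lin : is_linear_fun g).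
Hypotheses (g_le : forall x, `|g x| <= N x) (gu : g u = 1).

Definition rank1_proj : 'M[R]_n := (\col_i g (delta_mx 0 i)) *m u.

Lemma mul_rank1_proj x : x *m rank1_proj = g x *: u.
Proof.
rewrite mulmxA -mul_scalar_mx; congr (_ *m _); apply/matrixP => i j.
rewrite !ord1 !mxE mulr1n -(coord_pairing_row g_lin) /coord_pairing.
by apply: eq_bigr => k _; rewrite !mxE mulrC.
Qed.

Lemma nrm_mul_proj_add_far (A : 'M_n) t e x : 0 <= t -> N x <= 1 -> `|g x| <= 1 - e ->
  N (x *m (rank1_proj + t *: A)) <= 1 - e + t * opnorm N A.
Proof.
move=> t_ge0 Nx gx; rewrite mulmxDr mul_rank1_proj -scalemxAr.
rewrite (le_trans (ler_nrmD HN _ _)) // !(nrmZ HN) Nu mulr1 (ger0_norm t_ge0).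
by apply: lerD => //; apply: ler_wpM2l => //; exact: opnorm_ub.
Qed.

Lemma mul_proj_add (A : 'M_n) t y : g y != 0 ->
  y *m (rank1_proj + t *: A) = g y *: (u + (t / g y) *: (y *m A)).
Proof.
move=> gy0; rewrite mulmxDr mul_rank1_proj -scalemxAr scalerDr scalerA.
by rewrite mulrCA mulfV ?mulr1.
Qed.

(* Here N (x *m (P + t A)) = g x * N (u + w) with w = (t / g x) *: (x *m A)
   small: the Frechet expansion of N at u bounds N (u + w), and g (x *m A) is
   close to g (u *m A) because x is close to u. *)
Lemma nrm_mul_proj_add_near (A : 'M_n) eps : 0 < eps ->
  exists2 e, 0 < e & exists2 t0, 0 < t0 & forall t x, 0 < t -> t <= t0 ->
  N x <= 1 -> 1 - e < g x ->
  N (x *m (rank1_proj + t *: A)) <= 1 + t * (g (u *m A) + eps).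
Proof.
move=> eps_gt0; set b := g (u *m A); set C := opnorm N A.
have C_ge0 : 0 <= C := opnorm_ge0 HN A.
have C1_gt0 : 0 < 2 * (C + 1) by rewrite mulr_gt0 // ltr_wpDl.
pose eps1 := eps / (2 * (C + 1)).
have eps1_gt0 : 0 < eps1 by rewrite divr_gt0.
have C_eps1 : 2 * (C * eps1) <= eps.
  have -> : 2 * (C * eps1) = eps * (C / (C + 1)).
    by rewrite /eps1; field; rewrite gt_eqF // ltr_wpDl.
  by rewrite ler_piMr ?(ltW eps_gt0) // ler_pdivrMr ?ltr_wpDl // mul1r lerDl.
have [ea ea_gt0 ea_near] := near_u_of_g_near1 HN N_sc Nu g_lin g_le gu eps1_gt0.
have [ef ef_gt0 ef_frechet] := nrm_frechet_at HN N_smooth Nu g_lin g_le gu eps1_gt0.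
exists (Num.min ea 2^-1); first by rewrite lt_min ea_gt0 invr_gt0 ltr0n.
exists (ef / (2 * (C + 1))); first by rewrite divr_gt0.
move=> t x t_gt0; rewrite ler_pdivlMr // => t_ef Nx gx.
have min_ea : Num.min ea 2^-1 <= ea by rewrite ge_min lexx.
have min_half : Num.min ea 2^-1 <= 2^-1 by rewrite ge_min lexx orbT.
have gx_half : 2^-1 < g x by lra.
have gx_gt0 : 0 < g x by rewrite (lt_trans _ gx_half) // invr_gt0 ltr0n.
have gx_le1 : g x <= 1 by rewrite (le_trans (ler_norm _)) ?(le_trans (g_le x)).
have NxA : N (x *m A) <= C by exact: opnorm_ub.
have t_gx_ge0 : 0 <= t / g x by rewrite divr_ge0 ?ltW.
have t_gx_le : t / g x <= 2 * t by rewrite ler_pdivrMr //; nra.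
rewrite mul_proj_add ?gt_eqF // (nrmZ HN) (ger0_norm (ltW gx_gt0)).
set w := (t / g x) *: _.
have Nw_eq : N w = t / g x * N (x *m A) by rewrite (nrmZ HN) ger0_norm.
have Nw_le : N w <= ef.
  by rewrite Nw_eq; apply: le_trans t_ef; have := nrm_ge0 HN (x *m A); nra.
have gxA : g (x *m A) <= b + C * eps1.
  rewrite -[x](subrK u) mulmxDl (linfunD g_lin) -/b addrC lerD2l (le_trans (ler_norm _)) //.
  rewrite (le_trans (g_le _)) // (le_trans (nrm_mul_le_opnorm HN _ _)) //.
  by rewrite ler_wpM2l // ltW // ea_near //; lra.
have frechet : g x * N (u + w) <= g x + t * g (x *m A) + eps1 * (t * N (x *m A)).
  have <- : g x * (1 + g w + eps1 * N w) = g x + t * g (x *m A) + eps1 * (t * N (x *m A)).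
    by rewrite (linfunZ g_lin) Nw_eq; field; rewrite gt_eqF.
  by rewrite ler_pM2l // ef_frechet.
have h1 : t * g (x *m A) <= t * (b + C * eps1) by rewrite ler_wpM2l ?(ltW t_gt0).
have h2 : eps1 * (t * N (x *m A)) <= t * (C * eps1).
  by rewrite mulrCA [C * _]mulrC ler_wpM2l ?(ltW t_gt0) ?ler_wpM2l ?(ltW eps1_gt0).
have h3 : t * (2 * (C * eps1)) <= t * eps by rewrite ler_wpM2l ?(ltW t_gt0).
lra.
Qed.

Lemma opnorm_proj_add_le (A : 'M_n) eps : 0 < eps -> exists2 t, 0 < t &
  opnorm N (rank1_proj + t *: A) <= 1 + t * (g (u *m A) + eps).
Proof.
move=> eps_gt0; set b := g (u *m A); set C := opnorm N A.
have [e e_gt0 [t0 t0_gt0 near_le]] := nrm_mul_proj_add_near A eps_gt0.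
have D_gt0 : 0 < C + `|b| + 1 by rewrite ltr_wpDl ?addr_ge0 ?opnorm_ge0.
exists (Num.min t0 (e / (C + `|b| + 1))); first by rewrite lt_min t0_gt0 divr_gt0.
set t := Num.min _ _; have t_gt0 : 0 < t by rewrite lt_min t0_gt0 divr_gt0.
have t_le : t * (C + `|b| + 1) <= e by rewrite -ler_pdivlMr // ge_min lexx orbT.
apply: opnorm_le => // x Nx; have [gx_far|gx_near] := lerP `|g x| (1 - e).
  apply: le_trans (nrm_mul_proj_add_far A (ltW t_gt0) Nx gx_far) _.
  have tb : t * - b <= t * `|b| by rewrite ler_wpM2l ?(ltW t_gt0) // -normrN ler_norm.
  have := mulr_gt0 t_gt0 eps_gt0; rewrite -/C; lra.
have t_t0 : t <= t0 by rewrite ge_min lexx.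
have [gx_ge0|gx_lt0] := lerP 0 (g x).
  by rewrite (ger0_norm gx_ge0) in gx_near; exact: near_le t_gt0 t_t0 Nx gx_near.
rewrite (ltr0_norm gx_lt0) -(linfunN g_lin) in gx_near.
by rewrite -(nrmN HN) -mulNmx; apply: near_le t_gt0 t_t0 _ gx_near; rewrite (nrmN HN).
Qed.

Definition proj_blend (d : R) : 'M[R]_n := (1 - d) *: 1%:M + d *: rank1_proj.

Lemma mul_proj_blend d x : x *m proj_blend d = (1 - d) *: x + d *: (g x *: u).
Proof. by rewrite mulmxDr -!scalemxAr mulmx1 mul_rank1_proj. Qed.

Lemma mul_u_proj_blend d : u *m proj_blend d = u.
Proof. by rewrite mul_proj_blend gu scale1r -scalerDl subrK scale1r. Qed.

Lemma nrm_mul_proj_blend_le d x : 0 <= d <= 1 ->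
  N (x *m proj_blend d) <= (1 - d) * N x + d * `|g x|.
Proof.
move=> /andP[d_ge0 d_le1]; rewrite mul_proj_blend (le_trans (ler_nrmD HN _ _)) //.
by rewrite !(nrmZ HN) Nu mulr1 (ger0_norm d_ge0) ger0_norm ?subr_ge0.
Qed.

Lemma opnorm_proj_blend d : 0 <= d <= 1 -> opnorm N (proj_blend d) = 1.
Proof.
move=> d01; apply/le_anti/andP; split.
  apply: opnorm_le => // x Nx; apply: le_trans (nrm_mul_proj_blend_le x d01) _.
  by move: d01 (g_le x) => /andP[]; nra.
by rewrite -[leLHS]Nu -[in N u](mul_u_proj_blend d) opnorm_ub ?Nu.
Qed.

(* F (1%:M) <= 1 while F (proj_blend d) = 1 forces F rank1_proj >= 1; the
   first-order bound on opnorm (rank1_proj + t A) then bounds F A. *)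
Lemma norming_proj_blend_le d (F : 'M[R]_n -> R) : 0 < d <= 1 ->
  is_linear_fun F -> (forall A, `|F A| <= opnorm N A) -> F (proj_blend d) = 1 ->
  forall A, F A <= g (u *m A).
Proof.
move=> /andP[d_gt0 d_le1] F_lin F_le FT A.
have F1 : F 1%:M <= 1.
  apply: le_trans (ler_norm _) (le_trans (F_le _) _).
  by apply: opnorm_le => // x Nx; rewrite mulmx1.
have FP : 1 <= F rank1_proj.
  move: FT; rewrite (linfunD F_lin) !(linfunZ F_lin) => FT.
  by rewrite -(ler_pM2l d_gt0) mulr1; nra.
apply/ler_addgt0Pr => eps eps_gt0.
have [t t_gt0 t_le] := opnorm_proj_add_le A eps_gt0.
rewrite -(ler_pM2l t_gt0); have := le_trans (ler_norm _) (le_trans (F_le _) t_le).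
rewrite (linfunD F_lin) (linfunZ F_lin); lra.
Qed.

Lemma proj_blend_smooth d : 0 < d < 1 -> smooth_norm_one_ops N (proj_blend d).
Proof.
move=> /andP[d_gt0 d_lt1]; have d01 : 0 <= d <= 1 by rewrite !ltW.
have d01' : 0 < d <= 1 by rewrite d_gt0 ltW.
have oT := opnorm_proj_blend d01; split => //; split.
  by move=> T0; apply: (nrm_eq1_neq0 HN Nu); rewrite -(mul_u_proj_blend d) T0 mulmx0.
pose F0 A := g (u *m A).
have F0_lin : is_linear_fun F0.
  by move=> a A B; rewrite /F0 mulmxDr -scalemxAr (linfunD g_lin) (linfunZ g_lin).
have F0_le A : `|F0 A| <= opnorm N A.
  by apply: le_trans (g_le _) (opnorm_ub HN A _); rewrite Nu.
have F0T : F0 (proj_blend d) = 1 by rewrite /F0 mul_u_proj_blend.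
exists F0; split; first exact: norming_functionalP F0_lin F0_le oT F0T.
move=> F [F_dual F1 FT]; have F_lin : is_linear_fun F by case: F_dual.
have F_le := dual_norm1_le (opnorm_is_norm HN) F_dual F1.
rewrite oT in FT; have F_F0 := norming_proj_blend_le d01' F_lin F_le FT.
apply/funext => A; apply/le_anti; rewrite F_F0 andbT.
by have := F_F0 (- A); rewrite (linfunN F_lin) mulmxN (linfunN g_lin) lerN2.
Qed.

Lemma not_uniform_sBPBp_of_kernel x0 : N x0 = 1 -> g x0 = 0 ->
  ~ uniform_sBPBp N (smooth_norm_one_ops N).
Proof.
move=> Nx0 gx0 /(_ 1 ltr01) [eta [eta_gt0 sBPBp]].
pose d := Num.min (eta / 2) 2^-1.
have d_gt0 : 0 < d by rewrite lt_min divr_gt0 //= invr_gt0 ltr0n.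
have d_half : d <= 2^-1 by rewrite ge_min lexx orbT.
have d_eta : d <= eta / 2 by rewrite ge_min lexx.
have d01 : 0 < d < 1 by rewrite d_gt0 /=; lra.
have x0T : 1 - eta < N (x0 *m proj_blend d).
  rewrite mul_proj_blend gx0 scale0r scaler0 addr0 (nrmZ HN) Nx0 mulr1 ger0_norm; lra.
have [x1 [Nx1 x1T x1_near]] := sBPBp _ _ (proj_blend_smooth d01) Nx0 x0T.
have gx1 : 1 <= `|g x1|.
  have d01' : 0 <= d <= 1 by rewrite (ltW d_gt0) /=; lra.
  rewrite -(ler_pM2l d_gt0) mulr1.
  by have := nrm_mul_proj_blend_le x1 d01'; rewrite x1T Nx1; lra.
by have := g_le (x1 - x0); rewrite (linfunB g_lin) gx0 subr0; lra.
Qed.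

End RankOneProjection.

Theorem theorem2p10 (R : realType) (n : nat) (N : 'rV[R]_n -> R) :
  (1 < n)%N -> is_norm N -> strictly_convex N -> smooth_space N ->
  ~ uniform_sBPBp N (smooth_norm_one_ops N).
Proof.
move=> n_gt1 HN N_sc N_smooth.
have [u Nu] := exists_nrm_eq1 HN (ltnW n_gt1).
have [g [g_lin g_le gu]] := smooth_point_norming HN (N_smooth u (nrm_eq1_neq0 HN Nu)).
rewrite Nu in gu; have [v v_neq0 gv] := linfun_kernel_neq0 n_gt1 g_lin.
apply: (not_uniform_sBPBp_of_kernel HN N_sc N_smooth Nu g_lin g_le gu (x0 := (N v)^-1 *: v)).
  exact: nrm_normalize.
by rewrite (linfunZ g_lin) gv mulr0.
Qed.
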